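(* Let $n\ge 3$, let $K_n$ be the complete graph on $n$ vertices, and let $H(d,q)$ be the Hamming graph with $d\ge 1$ and $q\ge 3$. Let the distinct adjacency eigenvalues of $H(d,q)$ be $\lambda_i=d(q-1)-qi$ for $i=0,1,\ldots,d$, and its distinct distance eigenvalues be $\mu_0=t=dq^{d-1}(q-1)$, $\mu_1=-q^{d-1}$, $\mu_2=0$. Then the distance eigenvalues of $K_n\otimes H(d,q)$ are $2n-2+nt+\lambda_0$, $2n-2-nq^{d-1}+\lambda_1$, $2n-2+\lambda_i$ for $i=2,3,\ldots,d$, and $\lambda_i-2$ for $i=0,1,\ldots,d$.
   Context: The Hamming graph $H(d,q)$ has as vertices all ordered $d$-tuples over a $q$-element set, two vertices being adjacent if and only if they differ in exactly one coordinate. The Kronecker product $G\otimes H$ of simple graphs $G,H$ has vertex set $V(G)\times V(H)$, with $(x,y)$ adjacent to $(u,v)$ if and only if $xu\in E(G)$ and $yv\in E(H)$. Distance eigenvalues are the eigenvalues of the distance matrix, whose $(u,v)$ entry is the length of a shortest $u$–$v$ path. *)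

From HB Require Import structures.
From mathcomp Require Import all_boot all_order all_algebra.
Set Implicit Arguments. Unset Strict Implicit. Unset Printing Implicit Defensive.
Import Order.TTheory GRing.Theory Num.Theory.
Local Open Scope ring_scope.

(* Graphs are given as (symmetric, irreflexive) boolean relations on a finType. *)

Definition complete_adj (n : nat) : rel 'I_n := fun x u => x != u.

Definition hamming_adj (d q : nat) : rel {ffun 'I_d -> 'I_q} :=
  fun f g => #|[set i | f i != g i]| == 1%N.

Definition kron_adj (T U : finType) (e : rel T) (e' : rel U) : rel (T * U) :=
  fun xy uv => e xy.1 uv.1 && e' xy.2 uv.2.

Fixpoint reach (T : finType) (e : rel T) (k : nat) (u v : T) : bool :=
  if k is k'.+1 then [exists w, e u w && reach e k' w v] else u == v.

(* Graph distance: least k with a walk of length k from u to v (a shortest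
   walk has length < #|T| when it exists; for disconnected pairs the value
   is #|T|, which never arises for the connected graphs considered here). *)
Definition gdist (T : finType) (e : rel T) (u v : T) : nat :=
  find (fun k => reach e k u v) (iota 0 #|T|).

Definition dist_mx (R : nzRingType) (T : finType) (e : rel T) : 'M[R]_#|T| :=
  \matrix_(i, j) (gdist e (enum_val i) (enum_val j))%:R.

Definition ham_lambda (R : nzRingType) (d q i : nat) : R :=
  (d * (q - 1))%:R - (q * i)%:R.

Definition ham_t (R : nzRingType) (d q : nat) : R :=
  (d * q ^ (d - 1) * (q - 1))%:R.

(* For n, q >= 3, the distance in K_n (x) H(d,q) between (x,y) and (u,v) is the Hamming
   distance h of y and v, except that it is 2 when x = u and h = 1, or when x <> u and h = 0.
   With J the all-ones and I the identity kernel of each factor, this reads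
     D = sum_c J (x) (J-I at c, J elsewhere) + sum_c I (x) (J-I at c, I elsewhere)
         + 2 (J-I) (x) I.
   Every factor lies in the algebra spanned by I and J, whose primitive idempotents are
   J/m and I - J/m.  Their tensor products E_(s,A), indexed by a choice s for the K_n factor
   and a set A of Hamming coordinates, sum to the identity, and D acts on each E_(s,A) by
   a scalar depending only on s and |A|; these scalars are therefore exactly the
   eigenvalues of D. *)

From HB Require Import structures.
From mathcomp Require Import all_boot all_order all_algebra.
From mathcomp Require Import zify ring.
Import Order.TTheory GRing.Theory Num.Theory.
Set Implicit Arguments. Unset Strict Implicit. Unset Printing Implicit Defensive.

Lemma exists_other (T : finType) (x y : T) : (3 <= #|T|)%N ->
  exists z : T, (z != x) && (z != y).
Proof.
move=> T3; have /card_gt0P[z] : (0 < #|~: [set x; y]|)%N.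
  by move: T3; rewrite -(cardsC [set x; y]) cards2; case: (x != y) => /=; lia.
by rewrite !inE negb_or; exists z.
Qed.

Lemma exists_set_card (I : finType) k : (k <= #|I|)%N -> exists A : {set I}, #|A| = k.
Proof.
move=> kI; exists [set x in take k (enum I)].
by rewrite cardsE (card_uniqP _) ?take_uniq ?enum_uniq // size_takel // -cardE.
Qed.

Section HammingDistance.
Variables (I A : finType).
Implicit Types (f g h : {ffun I -> A}).

Definition hamming_dist f g : nat := #|[set i | f i != g i]|.

Lemma hamming_distE f g : hamming_dist f g = (\sum_i (f i != g i))%N.
Proof. by rewrite /hamming_dist -sum1_card big_mkcond; apply: eq_bigr => i _; rewrite inE. Qed.

Lemma hamming_dist_eq0 f g : (hamming_dist f g == 0)%N = (f == g).
Proof.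
rewrite /hamming_dist cards_eq0; apply/eqP/eqP => [fg | ->].
  by apply/ffunP => i; apply/eqP; have /setP/(_ i) := fg; rewrite !inE => /negbFE.
by apply/setP => i; rewrite !inE eqxx.
Qed.

Lemma hamming_dist_le f g : (hamming_dist f g <= #|I|)%N.
Proof. exact: max_card. Qed.

Lemma hamming_distC f g : hamming_dist f g = hamming_dist g f.
Proof. by rewrite !hamming_distE; apply: eq_bigr => i _; rewrite eq_sym. Qed.

Lemma hamming_dist_triangle f g h :
  (hamming_dist f h <= hamming_dist f g + hamming_dist g h)%N.
Proof.
rewrite !hamming_distE -big_split /=; apply: leq_sum => i _.
by case: (f i =P h i); case: (f i =P g i) => // ->; case: eqP.
Qed.

Definition ffun_set f (c : I) (a : A) : {ffun I -> A} :=
  [ffun i => if i == c then a else f i].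

Lemma hamming_dist_set f g c a :
  (hamming_dist (ffun_set f c a) g + (f c != g c) = hamming_dist f g + (a != g c))%N.
Proof.
rewrite !hamming_distE (bigD1 c) //= [in RHS](bigD1 c) //= ffunE eqxx.
rewrite (eq_bigr (fun i => nat_of_bool (f i != g i))) => [|i /negbTE ic]; last by rewrite ffunE ic.
by rewrite addnAC [in RHS]addnC addnA.
Qed.

Lemma hamming_dist_set_l f c a : hamming_dist f (ffun_set f c a) = (f c != a).
Proof.
rewrite hamming_distE (bigD1 c) //= ffunE eqxx big1 ?addn0 // => i /negbTE ic.
by rewrite ffunE ic eqxx.
Qed.

Lemma hamming_step_closer f g : f != g ->
  exists2 h, hamming_dist f h = 1%N & hamming_dist h g = (hamming_dist f g).-1.
Proof.
rewrite -hamming_dist_eq0 -lt0n => /card_gt0P[c]; rewrite inE => fgc.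
exists (ffun_set f c (g c)); first by rewrite hamming_dist_set_l fgc.
by have := hamming_dist_set f g c (g c); rewrite fgc eqxx; lia.
Qed.

Lemma hamming_step_aside f g : (3 <= #|A|)%N -> f != g ->
  exists2 h, hamming_dist f h = 1%N & hamming_dist h g = hamming_dist f g.
Proof.
move=> A3; rewrite -hamming_dist_eq0 -lt0n => /card_gt0P[c].
rewrite inE => fgc; have [a /andP[af ag]] := exists_other (f c) (g c) A3.
exists (ffun_set f c a); first by rewrite hamming_dist_set_l eq_sym af.
by have := hamming_dist_set f g c a; rewrite fgc ag; lia.
Qed.

Lemma hamming_step_any f : (0 < #|I|)%N -> (1 < #|A|)%N ->
  exists h, hamming_dist f h = 1%N.
Proof.
move=> /card_gt0P[c _] A1.
have /card_gt0P[a] : (0 < #|[set~ f c]|)%N by rewrite cardsC1 -subn1 subn_gt0.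
by rewrite !inE => af; exists (ffun_set f c a); rewrite hamming_dist_set_l eq_sym af.
Qed.

End HammingDistance.

Lemma reach_kron (T U : finType) (e : rel T) (e' : rel U) k x y u v :
  reach (kron_adj e e') k (x, y) (u, v) = reach e k x u && reach e' k y v.
Proof.
elim: k x y => [|k IH] x y /=; first by rewrite xpair_eqE.
apply/existsP/andP => [[[w w'] /andP[/andP[xw yw']]] |
                       [/existsP[w /andP[xw wu]] /existsP[w' /andP[yw' w'v]]]].
  by rewrite IH => /andP[wu w'v]; split; apply/existsP; [exists w | exists w']; apply/andP.
by exists (w, w'); rewrite /kron_adj /= xw yw' IH wu w'v.
Qed.

Lemma reach_complete n k (x u : 'I_n) : (3 <= n)%N ->
  reach (@complete_adj n) k x u = if k is 0 then x == u else (k != 1)%N || (x != u).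
Proof.
rewrite -{1}[n]card_ord => n3; elim: k x => [|k IH] x //=.
case: k IH => [|k] IH.
  apply/existsP/idP => [[w /andP[xw /eqP <-]] // | /= xu].
  by exists u; rewrite /complete_adj xu /=.
apply/existsP; have [w /andP[wx wu]] := exists_other x u n3.
by exists w; rewrite /complete_adj eq_sym wx IH wu orbT.
Qed.

Lemma hamming_adjE d q (y v : {ffun 'I_d -> 'I_q}) :
  hamming_adj y v = (hamming_dist y v == 1%N).
Proof. by []. Qed.

Lemma reach_hamming d q k (y v : {ffun 'I_d -> 'I_q}) : (0 < d)%N -> (3 <= q)%N ->
  reach (@hamming_adj d q) k y v =
    if k == 1%N then hamming_dist y v == 1%N else (hamming_dist y v <= k)%N.
Proof.
rewrite -{1}[d]card_ord -{1}[q]card_ord => d0 q3.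
elim: k y => [|k IH] y /=; first by rewrite leqn0 hamming_dist_eq0.
apply/existsP/idP => [[w /andP[yw]] | yv].
  have {}yw : hamming_dist y w = 1%N by apply/eqP.
  have := hamming_dist_triangle y w v; rewrite IH yw.
  case: k {IH} => [|k] tri.
    by rewrite leqn0 hamming_dist_eq0 => /eqP wv; rewrite -wv yw.
  by case: k tri => [|k] /=; move: (hamming_dist y v) (hamming_dist w v) => h h'; lia.
case: k IH yv => [|k] IH yv; first by exists v; rewrite /= eqxx andbT; exact: yv.
have [-> {y yv} | y_v] := eqVneq y v.
  have [w vw] := hamming_step_any v d0 (ltnW q3).
  by exists w; rewrite hamming_adjE vw IH hamming_distC vw; case: k {IH}.
have [/andP[/eqP k0 yv1] | long] := boolP ((k == 0%N) && (hamming_dist y v == 1%N)).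
  have [w yw wv] := hamming_step_aside q3 y_v.
  by exists w; rewrite hamming_adjE yw IH wv k0 yv1.
have [w yw wv] := hamming_step_closer y_v.
exists w; rewrite hamming_adjE yw IH wv eqxx /=.
move: yv long; rewrite -hamming_dist_eq0 in y_v.
by case: k {IH} => [|k] /=; move: (hamming_dist y v) y_v => h; lia.
Qed.

Lemma gdist_eq (T : finType) (e : rel T) u v k :
  reach e k u v -> (forall j, (j < k)%N -> ~~ reach e j u v) -> (k < #|T|)%N ->
  gdist e u v = k.
Proof.
move=> ek below kT; rewrite /gdist -(subnKC (ltnW kT)) iotaD find_cat size_iota.
have -> : has (fun j => reach e j u v) (iota 0 k) = false.
  by apply/hasPn => j; rewrite mem_iota; exact: below.
have : (0 < #|T| - k)%N by rewrite subn_gt0.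
by case: (#|T| - k)%N => [|j] // _ /=; rewrite add0n ek addn0.
Qed.

Definition kron_dist (same : bool) (h : nat) : nat :=
  h + (same && (h == 1%N)) + 2 * (~~ same && (h == 0%N)).

Lemma gdist_kron_complete_hamming n d q (x u : 'I_n) (y v : {ffun 'I_d -> 'I_q}) :
  (3 <= n)%N -> (0 < d)%N -> (3 <= q)%N ->
  gdist (kron_adj (@complete_adj n) (@hamming_adj d q)) (x, y) (u, v) =
    kron_dist (x == u) (hamming_dist y v).
Proof.
move=> n3 d0 q3.
have reachE k : reach (kron_adj (@complete_adj n) (@hamming_adj d q)) k (x, y) (u, v) =
    (if k is 0 then x == u else (k != 1)%N || (x != u)) &&
    (if k == 1%N then hamming_dist y v == 1%N else (hamming_dist y v <= k)%N).
  by rewrite reach_kron reach_complete // reach_hamming.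
have hd := hamming_dist_le y v; rewrite card_ord in hd.
have qd : (d < q ^ d)%N by apply: ltn_expl; lia.
apply: gdist_eq.
- by rewrite reachE /kron_dist; case: (x == u); move: (hamming_dist y v) hd => [|[|h]] //=; lia.
- move=> k; rewrite reachE /kron_dist; case: (x == u); move: (hamming_dist y v) hd => [|[|h]];
  case: k => [|[|k]] //=; lia.
- rewrite card_prod card_ffun !card_ord /kron_dist.
  have : (n * d.+1 <= n * q ^ d)%N by rewrite leq_mul2l qd orbT.
  by case: (x == u); move: (hamming_dist y v) hd => h; nia.
Qed.

Local Open Scope ring_scope.

Section CoordinateSums.
Variables (R : comNzRingType) (I : finType).

Lemma sum_delta_mul (b : I) (F : I -> R) :
  \sum_c (c == b)%:R * F c = F b.
Proof.
rewrite (bigD1 b) //= eqxx mul1r big1 ?addr0 // => c /negbTE ->.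
by rewrite mul0r.
Qed.

Lemma prod_if_eq (c : I) (F G : I -> R) :
  \prod_i (if i == c then F i else G i) = F c * \prod_(i | i != c) G i.
Proof. by rewrite (bigD1 c) //= eqxx; congr (_ * _); apply: eq_bigr => i /negbTE ->. Qed.

Lemma prod_eq_ffun (A : finType) (y v : {ffun I -> A}) :
  \prod_i ((y i == v i)%:R : R) = (y == v)%:R.
Proof.
have [-> | yv] := eqVneq y v; first by rewrite big1 // => i _; rewrite eqxx.
have [i yvi] : exists i, y i != v i.
  apply/existsP; rewrite -negb_forall; apply: contra yv => /forallP yv.
  by apply/eqP/ffunP => i; apply/eqP.
by rewrite (bigD1 i) //= (negbTE yvi) mul0r.
Qed.

Lemma sum_set_prod (F : I -> bool -> R) :
  \sum_(A : {set I}) \prod_i F i (i \in A) = \prod_i (F i true + F i false).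
Proof.
under [RHS]eq_bigr do rewrite -big_bool.
rewrite bigA_distr_bigA (reindex (fun A : {set I} => [ffun i => i \in A])) /=.
  by apply: eq_big => // A _; apply: eq_bigr => i _; rewrite ffunE.
exists (fun f : {ffun I -> bool} => [set i | f i]) => [A _ | f _].
  by apply/setP => i; rewrite inE ffunE.
by apply/ffunP => i; rewrite ffunE inE.
Qed.

Lemma sum_if_mem (A : {set I}) (x y : R) :
  \sum_i (if i \in A then x else y) = x *+ #|A| + y *+ (#|I| - #|A|).
Proof.
rewrite (bigID (mem A)) /=.
rewrite (eq_bigr (fun=> x)) => [|i ->] //.
rewrite [X in _ + X](eq_bigr (fun=> y)) => [|i iA]; last by rewrite (negbTE iA).
rewrite !sumr_const; congr (_ + _); congr (_ *+ _).
by rewrite -(cardC A) addKn; apply: eq_card => i; rewrite !inE.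
Qed.

Lemma prod_but_one_const (i : I) (x : R) : \prod_(j | j != i) x = x ^+ #|I|.-1.
Proof. by rewrite prodr_const cardC1. Qed.

Lemma sum_prod_but_one (A : {set I}) (f g : bool -> R) : g true = 0 ->
  \sum_i f (i \in A) * \prod_(j | j != i) g (j \in A) =
    if #|A| == 0%N then f false * g false ^+ #|I|.-1 *+ #|I|
    else if #|A| == 1%N then f true * g false ^+ #|I|.-1 else 0.
Proof.
move=> g_true; have [-> | [i0 i0A]] := set_0Vmem A.
  rewrite cards0 /= -sumr_const; apply: eq_bigr => i _; rewrite in_set0.
  by rewrite -(prod_but_one_const i); congr (_ * _); apply: eq_bigr => j _; rewrite in_set0.
rewrite (bigD1 i0) //= [X in _ + X]big1 ?addr0 => [|i ii0]; last first.
  by rewrite (bigD1 i0) 1?eq_sym //= i0A g_true mul0r mulr0.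
rewrite (cardsD1 i0 A) i0A add1n /=.
have [AD0 | [i1]] := set_0Vmem (A :\ i0).
  rewrite AD0 cards0 /= -(prod_but_one_const i0); congr (_ * _).
  apply: eq_bigr => j ji0; have /setP/(_ j) := AD0.
  by rewrite !inE ji0 /= => ->.
rewrite !inE => /andP[i1i0 i1A].
have /card_gt0P AD_gt0 : exists i, i \in A :\ i0 by exists i1; rewrite !inE i1i0.
by rewrite eqSS (negbTE (lt0n_neq0 AD_gt0)) (bigD1 i1) //= i1A g_true mul0r mulr0.
Qed.

End CoordinateSums.

Lemma sum_unique_diff (R : comNzRingType) (I A : finType) (y v : {ffun I -> A}) :
  \sum_i ((y i != v i)%:R * \prod_(j | j != i) (y j == v j)%:R : R) =
    (hamming_dist y v == 1%N)%:R.
Proof.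
set D := [set i | y i != v i].
transitivity (\sum_i (i \in D)%:R * \prod_(j | j != i) ((~~ (j \in D))%:R : R)).
  by apply: eq_bigr => i _; rewrite inE; congr (_ * _); apply: eq_bigr => j _; rewrite inE negbK.
rewrite (@sum_prod_but_one _ _ D (fun b => b%:R) (fun b => (~~ b)%:R)) // -/(hamming_dist y v).
by case: (hamming_dist y v) => [|[|h]] /=; rewrite ?mul0r ?mul0rn ?mul1r ?expr1n.
Qed.

Section Kernels.
Variable R : comNzRingType.

Definition kernel_mx (T : finType) (K : T -> T -> R) : 'M[R]_#|T| :=
  \matrix_(i, j) K (enum_val i) (enum_val j).

Definition kconv (T : finType) (K L : T -> T -> R) (a b : T) : R :=
  \sum_c K a c * L c b.

Lemma mul_kernel_mx (T : finType) (K L : T -> T -> R) :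
  kernel_mx K *m kernel_mx L = kernel_mx (kconv K L).
Proof.
apply/matrixP => i j; rewrite !mxE /kconv [RHS](reindex (@enum_val T predT)) /=; last first.
  by exists enum_rank => x _; [rewrite enum_valK | rewrite enum_rankK].
by apply: eq_bigr => k _; rewrite !mxE.
Qed.

Lemma kernel_mx_delta (T : finType) : kernel_mx (fun a b : T => (a == b)%:R) = 1%:M.
Proof. by apply/matrixP => i j; rewrite !mxE (inj_eq enum_val_inj). Qed.

Lemma kernel_mx_neq0 (T : finType) (K : T -> T -> R) a : K a a != 0 -> kernel_mx K != 0.
Proof.
apply: contraNneq => /matrixP/(_ (enum_rank a) (enum_rank a)).
by rewrite !mxE enum_rankK => ->.
Qed.

Definition ktens (T I U : finType) (M : T -> T -> R) (Ms : I -> U -> U -> R)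
    (a b : T * {ffun I -> U}) : R :=
  M a.1 b.1 * \prod_c Ms c (a.2 c) (b.2 c).

Lemma kconv_ktens (T I U : finType) M N (Ms Ns : I -> U -> U -> R) (a b : T * {ffun I -> U}) :
  kconv (ktens M Ms) (ktens N Ns) a b =
    ktens (kconv M N) (fun c => kconv (Ms c) (Ns c)) a b.
Proof.
case: a b => x y [u v]; rewrite /kconv /ktens /= -(pair_bigA _ (fun (x' : T) (y' : {ffun I -> U}) =>
  M x x' * \prod_c Ms c (y c) (y' c) * (N x' u * \prod_c Ns c (y' c) (v c)))) /=.
rewrite mulr_suml; apply: eq_bigr => x' _; rewrite bigA_distr_bigA /= mulr_sumr.
by apply: eq_bigr => y' _; rewrite big_split /= mulrACA.
Qed.

Definition kernel_eigen (T : finType) (K E : T -> T -> R) (mu : R) : Prop :=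
  forall a b, kconv K E a b = mu * E a b /\ kconv E K a b = mu * E a b.

Lemma kernel_eigen_ktens (T I U : finType) (M E : T -> T -> R) mu
    (Ms Es : I -> U -> U -> R) mus :
  kernel_eigen M E mu -> (forall c, kernel_eigen (Ms c) (Es c) (mus c)) ->
  kernel_eigen (ktens M Ms) (ktens E Es) (mu * \prod_c mus c).
Proof.
move=> ME MsEs [x y] [u v]; rewrite !kconv_ktens /ktens /=.
have [-> ->] := ME x u.
have [-> ->] : \prod_c kconv (Ms c) (Es c) (y c) (v c) = \prod_c (mus c * Es c (y c) (v c)) /\
               \prod_c kconv (Es c) (Ms c) (y c) (v c) = \prod_c (mus c * Es c (y c) (v c)).
  by split; apply: eq_bigr => c _; case: (MsEs c (y c) (v c)).
by rewrite big_split /= mulrACA.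
Qed.

Definition mx_eigen (m : nat) (A E : 'M[R]_m) (mu : R) : Prop :=
  A *m E = mu *: E /\ E *m A = mu *: E.

Lemma kernel_eigen_mx (T : finType) (K E : T -> T -> R) mu :
  kernel_eigen K E mu -> mx_eigen (kernel_mx K) (kernel_mx E) mu.
Proof.
move=> KE; rewrite /mx_eigen !mul_kernel_mx.
by split; apply/matrixP => i j; rewrite !mxE; case: (KE (enum_val i) (enum_val j)).
Qed.

Lemma mx_eigenD m (A B E : 'M[R]_m) a b :
  mx_eigen A E a -> mx_eigen B E b -> mx_eigen (A + B) E (a + b).
Proof.
by move=> [AE EA] [BE EB]; rewrite /mx_eigen mulmxDl mulmxDr AE BE EA EB !scalerDl.
Qed.

Lemma mx_eigenZ m (A E : 'M[R]_m) a c : mx_eigen A E a -> mx_eigen (c *: A) E (c * a).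
Proof.
by move=> [AE EA]; rewrite /mx_eigen -scalemxAl -scalemxAr AE EA !scalerA.
Qed.

Lemma mx_eigen_sum m (I : finType) (A : I -> 'M[R]_m) E a :
  (forall i, mx_eigen (A i) E (a i)) -> mx_eigen (\sum_i A i) E (\sum_i a i).
Proof.
move=> AE; apply: (big_ind2 (fun B b => mx_eigen B E b)) => [|B C b c|i _].
- by rewrite /mx_eigen mul0mx mulmx0 scale0r.
- exact: mx_eigenD.
- exact: AE.
Qed.

End Kernels.

Lemma eigenvalue_idempotents (F : fieldType) m (A : 'M[F]_m) (J : finType)
    (E : J -> 'M[F]_m) (theta : J -> F) :
  \sum_j E j = 1%:M -> (forall j, E j != 0) -> (forall j, mx_eigen A (E j) (theta j)) ->
  forall x, eigenvalue A x <-> exists j, x = theta j.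
Proof.
move=> sumE E_neq0 AE x; split => [/eigenvalueP[v vA v_neq0] | [j ->]].
  have [j vE] : exists j, v *m E j != 0.
    apply/existsP; apply: contraNT v_neq0 => /existsPn vE0.
    by rewrite -[v]mulmx1 -sumE mulmx_sumr big1 // => j _; apply/eqP/negPn.
  exists j; have : x *: (v *m E j) = theta j *: (v *m E j).
    by rewrite scalemxAl -vA -mulmxA (AE j).1 scalemxAr.
  by move/eqP; rewrite -subr_eq0 -scalerBl scaler_eq0 (negbTE vE) orbF subr_eq0 => /eqP.
have [i Ei] : exists i, row i (E j) != 0.
  apply/existsP; apply: contraR (E_neq0 j) => /existsPn Erow.
  by apply/eqP/row_matrixP => i; rewrite row0; apply/eqP/negPn.
by apply/eigenvalueP; exists (row i (E j)); rewrite // -row_mul (AE j).2 linearZ.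
Qed.

Section CompleteGraphKernels.
Variables (R : numFieldType) (m : nat).
Implicit Types (a b : 'I_m) (s : bool).

Definition kIJ (alpha beta : R) : 'I_m -> 'I_m -> R :=
  fun a b => alpha * (a == b)%:R + beta.

Lemma kIJ_ones a b : kIJ 0 1 a b = 1.
Proof. by rewrite /kIJ mul0r add0r. Qed.

Lemma kIJ_delta a b : kIJ 1 0 a b = (a == b)%:R.
Proof. by rewrite /kIJ mul1r addr0. Qed.

Lemma kIJ_offdiag a b : kIJ (-1) 1 a b = (a != b)%:R.
Proof. by rewrite /kIJ; case: (a == b) => /=; rewrite ?mulr1 ?mulr0 ?addNr ?add0r. Qed.

Lemma kconv_kIJ alpha beta gamma delta a b :
  kconv (kIJ alpha beta) (kIJ gamma delta) a b =
    kIJ (alpha * gamma) (alpha * delta + beta * gamma + m%:R * (beta * delta)) a b.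
Proof.
rewrite /kconv /kIJ; under eq_bigr do rewrite mulrDl mulrDr mulrDr.
rewrite !big_split /= sumr_const card_ord.
rewrite (eq_bigr (fun c => (c == a)%:R * (alpha * (gamma * (c == b)%:R)))); last first.
  by move=> c _; rewrite [a == c]eq_sym; ring.
rewrite [X in _ + X + _](eq_bigr (fun c => (c == a)%:R * (alpha * delta))); last first.
  by move=> c _; rewrite [a == c]eq_sym; ring.
rewrite [X in _ + (X + _)](eq_bigr (fun c => (c == b)%:R * (beta * gamma))); last first.
  by move=> c _; ring.
by rewrite !sum_delta_mul -mulr_natl; ring.
Qed.

Definition kidem (s : bool) : 'I_m -> 'I_m -> R :=
  if s then kIJ 1 (- m%:R^-1) else kIJ 0 m%:R^-1.

Lemma kidem_sum a b : kidem true a b + kidem false a b = (a == b)%:R.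
Proof. by rewrite /kidem /kIJ; ring. Qed.

Lemma kidem_diag_neq0 s a : (1 < m)%N -> kidem s a a != 0.
Proof.
move=> m1; case: s; rewrite /kidem /kIJ eqxx mulr1 ?mul0r ?add0r.
  by rewrite subr_eq0 eq_sym invr_eq1 pnatr_eq1; lia.
by rewrite invr_eq0 pnatr_eq0; lia.
Qed.

Hypothesis m_gt0 : (0 < m)%N.

Lemma kernel_eigen_kIJ alpha beta s :
  kernel_eigen (kIJ alpha beta) (kidem s) (alpha + beta * (if s then 0 else m%:R)).
Proof.
have m_neq0 : m%:R != 0 :> R by rewrite pnatr_eq0 -lt0n.
by move=> a b; case: s; rewrite /kidem !kconv_kIJ /kIJ; split; field.
Qed.

Lemma kernel_eigen_ones s : kernel_eigen (kIJ 0 1) (kidem s) (if s then 0 else m%:R).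
Proof. by have := kernel_eigen_kIJ 0 1 s; rewrite add0r mul1r. Qed.

Lemma kernel_eigen_delta s : kernel_eigen (kIJ 1 0) (kidem s) 1.
Proof. by have := kernel_eigen_kIJ 1 0 s; rewrite mul0r addr0. Qed.

Lemma kernel_eigen_offdiag s :
  kernel_eigen (kIJ (-1) 1) (kidem s) (if s then -1 else m%:R - 1).
Proof. by have := kernel_eigen_kIJ (-1) 1 s; rewrite mul1r; case: s; rewrite ?addr0 // addrC. Qed.

End CompleteGraphKernels.
Arguments kidem {R m} s.

Section KroneckerHamming.
Variables (R : numFieldType) (n d q : nat).
Local Notation V := ('I_n * {ffun 'I_d -> 'I_q})%type.

Definition coord_diff_kernel (c : 'I_d) : V -> V -> R :=
  ktens (kIJ 0 1) (fun j => if j == c then kIJ (-1) 1 else kIJ 0 1).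

Definition unique_diff_kernel (c : 'I_d) : V -> V -> R :=
  ktens (kIJ 1 0) (fun j => if j == c then kIJ (-1) 1 else kIJ 1 0).

Definition first_diff_kernel : V -> V -> R := ktens (kIJ (-1) 1) (fun=> kIJ 1 0).

Lemma coord_diff_kernelE c x y u v : coord_diff_kernel c (x, y) (u, v) = (y c != v c)%:R.
Proof.
rewrite /coord_diff_kernel /ktens /= kIJ_ones mul1r; under eq_bigr do rewrite !if_arg.
by rewrite prod_if_eq kIJ_offdiag big1 ?mulr1 // => j _; apply: kIJ_ones.
Qed.

Lemma unique_diff_kernelE c x y u v :
  unique_diff_kernel c (x, y) (u, v) =
    (x == u)%:R * ((y c != v c)%:R * \prod_(j | j != c) (y j == v j)%:R).
Proof.
rewrite /unique_diff_kernel /ktens /= kIJ_delta; under eq_bigr do rewrite !if_arg.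
by rewrite prod_if_eq kIJ_offdiag; under eq_bigr do rewrite kIJ_delta.
Qed.

Lemma first_diff_kernelE x y u v :
  first_diff_kernel (x, y) (u, v) = (x != u)%:R * (y == v)%:R.
Proof.
rewrite /first_diff_kernel /ktens /= kIJ_offdiag -prod_eq_ffun.
by under eq_bigr do rewrite kIJ_delta.
Qed.

Lemma kron_dist_kernel x y u v :
  (kron_dist (x == u) (hamming_dist y v))%:R =
    \sum_c coord_diff_kernel c (x, y) (u, v) + \sum_c unique_diff_kernel c (x, y) (u, v)
    + 2 * first_diff_kernel (x, y) (u, v).
Proof.
under eq_bigr do rewrite coord_diff_kernelE.
under [X in _ + X + _]eq_bigr do rewrite unique_diff_kernelE.
rewrite first_diff_kernelE -mulr_sumr sum_unique_diff -hamming_dist_eq0.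
rewrite -natr_sum -hamming_distE /kron_dist; case: (x == u);
by case: (hamming_dist y v) => [|[|h]]; rewrite /= !natrD ?natrM; ring.
Qed.

Lemma dist_mx_kron_complete_hamming : (3 <= n)%N -> (0 < d)%N -> (3 <= q)%N ->
  dist_mx R (kron_adj (@complete_adj n) (@hamming_adj d q)) =
    \sum_c kernel_mx (coord_diff_kernel c) + \sum_c kernel_mx (unique_diff_kernel c)
    + 2 *: kernel_mx first_diff_kernel.
Proof.
move=> n3 d_gt0 q3; apply/matrixP => i j; rewrite !mxE !summxE.
under eq_bigr do rewrite mxE; under [X in _ + X + _]eq_bigr do rewrite mxE.
case: (enum_val i) (enum_val j) => [x y] [u v].
by rewrite gdist_kron_complete_hamming // kron_dist_kernel.
Qed.

Definition kron_idem (s : bool) (A : {set 'I_d}) : V -> V -> R :=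
  ktens (kidem s) (fun c => kidem (c \in A)).

Lemma sum_kron_idem : \sum_(j : bool * {set 'I_d}) kernel_mx (kron_idem j.1 j.2) = 1%:M.
Proof.
rewrite -kernel_mx_delta; apply/matrixP => i j; rewrite summxE !mxE.
under eq_bigr do rewrite mxE.
case: (enum_val i) (enum_val j) => [x y] [u v]; rewrite /kron_idem /ktens /=.
rewrite -(pair_bigA _ (fun s (A : {set 'I_d}) =>
  kidem s x u * \prod_c kidem (c \in A) (y c) (v c))) /=.
under eq_bigr do rewrite -mulr_sumr.
rewrite -mulr_suml big_bool /= kidem_sum (sum_set_prod (fun c s => kidem s (y c) (v c))).
under eq_bigr do rewrite kidem_sum.
by rewrite prod_eq_ffun xpair_eqE -natrM mulnb.
Qed.

Lemma kron_idem_neq0 s A : (1 < n)%N -> (1 < q)%N -> kernel_mx (kron_idem s A) != 0.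
Proof.
move=> n1 q1.
have n0 : (0 < n)%N by lia.
have q0 : (0 < q)%N by lia.
apply: (@kernel_mx_neq0 _ _ _ (Ordinal n0, [ffun=> Ordinal q0])).
rewrite /kron_idem /ktens mulf_neq0 ?kidem_diag_neq0 //.
by apply/prodf_neq0 => c _; apply: kidem_diag_neq0.
Qed.

Hypotheses (n_gt0 : (0 < n)%N) (q_gt0 : (0 < q)%N).

Lemma kernel_eigen_coord_diff c s A :
  kernel_eigen (coord_diff_kernel c) (kron_idem s A)
    ((if s then 0 else n%:R) *
     ((if c \in A then -1 else q%:R - 1) * \prod_(j | j != c) (if j \in A then 0 else q%:R))).
Proof.
rewrite -(prod_if_eq c (fun j => if j \in A then -1 else q%:R - 1)).
apply: kernel_eigen_ktens => [|j]; first exact: kernel_eigen_ones.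
by case: (j == c); [apply: kernel_eigen_offdiag | apply: kernel_eigen_ones].
Qed.

Lemma kernel_eigen_unique_diff c s A :
  kernel_eigen (unique_diff_kernel c) (kron_idem s A) (if c \in A then -1 else q%:R - 1).
Proof.
suff : kernel_eigen (unique_diff_kernel c) (kron_idem s A)
    (1 * \prod_j (if j == c then if j \in A then -1 else q%:R - 1 else 1)).
  by rewrite mul1r prod_if_eq prod_but_one_const expr1n mulr1.
apply: kernel_eigen_ktens => [|j]; first exact: kernel_eigen_delta.
by case: (j == c); [apply: kernel_eigen_offdiag | apply: kernel_eigen_delta].
Qed.

Lemma kernel_eigen_first_diff s A :
  kernel_eigen first_diff_kernel (kron_idem s A) (if s then -1 else n%:R - 1).
Proof.
suff : kernel_eigen first_diff_kernel (kron_idem s A)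
    ((if s then -1 else n%:R - 1) * \prod_(c : 'I_d) 1) by rewrite big1_eq mulr1.
apply: kernel_eigen_ktens => [|c]; [exact: kernel_eigen_offdiag | exact: kernel_eigen_delta].
Qed.

Definition kron_eig (s : bool) (k : nat) : R :=
  ham_lambda R d q k - 2 +
  (if s then 0
   else 2 * n%:R + n%:R * (if k == 0%N then ham_t R d q
                           else if k == 1%N then - (q ^ (d - 1))%:R else 0)).

Lemma kron_eigE s (A : {set 'I_d}) :
  \sum_c (if s then 0 else n%:R) *
     ((if c \in A then -1 else q%:R - 1) * \prod_(j | j != c) (if j \in A then 0 else q%:R))
  + \sum_c (if c \in A then -1 else q%:R - 1) + 2 * (if s then -1 else n%:R - 1)
  = kron_eig s #|A|.
Proof.
have Ad : (#|A| <= d)%N by have := max_card A; rewrite card_ord.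
rewrite -mulr_sumr (@sum_prod_but_one _ _ A (fun b => if b then -1 else q%:R - 1)
  (fun b => if b then 0 else q%:R)) // sum_if_mem card_ord /kron_eig /ham_lambda /ham_t.
rewrite -subn1 -[(q%:R - 1) *+ _]mulr_natr !natrM natrX !natrB //.
by case: s; case: eqP => [-> | _]; try case: eqP => [-> | _]; ring.
Qed.

Lemma mx_eigen_kron_dist s A : (3 <= n)%N -> (0 < d)%N -> (3 <= q)%N ->
  mx_eigen (dist_mx R (kron_adj (@complete_adj n) (@hamming_adj d q)))
           (kernel_mx (kron_idem s A)) (kron_eig s #|A|).
Proof.
move=> n3 d_gt0 q3; rewrite dist_mx_kron_complete_hamming // -kron_eigE.
apply: mx_eigenD; first apply: mx_eigenD; last apply: mx_eigenZ.
all: try apply: mx_eigen_sum => c; apply: kernel_eigen_mx.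
- exact: kernel_eigen_coord_diff.
- exact: kernel_eigen_unique_diff.
- exact: kernel_eigen_first_diff.
Qed.

Lemma kron_eig_spectrum (x : R) : (0 < d)%N ->
  (exists j : bool * {set 'I_d}, x = kron_eig j.1 #|j.2|) <->
  [\/ x = 2 * n%:R - 2 + n%:R * ham_t R d q + ham_lambda R d q 0,
      x = 2 * n%:R - 2 - n%:R * (q ^ (d - 1))%:R + ham_lambda R d q 1,
      (exists2 i : nat, (2 <= i <= d)%N & x = 2 * n%:R - 2 + ham_lambda R d q i)
    | (exists2 i : nat, (i <= d)%N & x = ham_lambda R d q i - 2)].
Proof.
move=> d_gt0; split => [[[s A] /= ->] | ].
  have Ad : (#|A| <= d)%N by have := max_card A; rewrite card_ord.
  rewrite /kron_eig; case: s; first by apply: Or44; exists #|A|; rewrite ?addr0.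
  have [-> | k_neq0] := eqVneq #|A| 0%N; first by apply: Or41; ring.
  have [-> | k_neq1] := eqVneq #|A| 1%N; first by apply: Or42; ring.
  apply: Or43; exists #|A|; first by rewrite Ad andbT; lia.
  ring.
have set_of_card k : (k <= d)%N -> exists A : {set 'I_d}, #|A| = k.
  by move=> kd; apply: exists_set_card; rewrite card_ord.
case=> [-> | -> | [k /andP[k2 kd] ->] | [k kd ->]].
- by have [A A0] := set_of_card 0%N isT; exists (false, A); rewrite /kron_eig A0 /=; ring.
- by have [A A1] := set_of_card 1%N d_gt0; exists (false, A); rewrite /kron_eig A1 /=; ring.
- have [A Ak] := set_of_card k kd; exists (false, A); rewrite /kron_eig Ak /=.
  by rewrite ifF ?ifF; [ring | lia | lia].
- by have [A Ak] := set_of_card k kd; exists (true, A); rewrite /kron_eig Ak addr0.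
Qed.

End KroneckerHamming.

Theorem theorem4p7 (R : numFieldType) (n d q : nat) :
  (3 <= n)%N -> (1 <= d)%N -> (3 <= q)%N ->
  forall x : R,
    eigenvalue (dist_mx R (kron_adj (@complete_adj n) (@hamming_adj d q))) x <->
    [\/ x = 2 * n%:R - 2 + n%:R * ham_t R d q + ham_lambda R d q 0,
        x = 2 * n%:R - 2 - n%:R * (q ^ (d - 1))%:R + ham_lambda R d q 1,
        (exists2 i : nat, (2 <= i <= d)%N & x = 2 * n%:R - 2 + ham_lambda R d q i)
      | (exists2 i : nat, (i <= d)%N & x = ham_lambda R d q i - 2)].
Proof.
move=> n3 d_gt0 q3 x.
have n_gt0 : (0 < n)%N by lia.
have q_gt0 : (0 < q)%N by lia.
rewrite -kron_eig_spectrum //.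
apply: (eigenvalue_idempotents (sum_kron_idem R n d q)) => [[s A] | [s A]].
- by apply: kron_idem_neq0; lia.
- exact: mx_eigen_kron_dist.
Qed.
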